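(* Let $\alpha_a$ be a labeled dGL hybrid game. If $S$ is an inductive Angelic subvalue map for $\alpha_a$, then $S$ is an Angelic subvalue map for $\alpha_a$, i.e. $\models S(b)\rightarrow\langle\mathrm{suffix}_b(\alpha_a)\rangle S(\mathsf{end})$ for every $b\in\mathrm{nodes}(\alpha_a)$. Dually, if $S$ is an inductive Demonic subvalue map for $\alpha_a$, then $S$ is a Demonic subvalue map for $\alpha_a$, i.e. $\models S(b)\rightarrow[\mathrm{suffix}_b(\alpha_a)] S(\mathsf{end})$ for every $b\in\mathrm{nodes}(\alpha_a)$.
   Context: Differential game logic (dGL). Hybrid games are generated by $\alpha,\beta ::= x:=e \mid \alpha;\beta \mid ?Q \mid \{x'=f(x)\,\&\,Q\} \mid \alpha^{*} \mid \alpha\cup\beta \mid x:=* \mid\ !Q \mid \{x'=f(x)\,\&\,Q\}^{d} \mid \alpha^{\times} \mid \alpha\cap\beta \mid x:=\otimes$, with $x$ a real variable (vector for ODEs), $e,f(x)$ polynomial terms, $Q$ a formula. Players Angel and Demon: $x:=e$ deterministic assignment; in $x:=*$ Angel (in $x:=\otimes$ Demon) assigns any real to $x$; in $\{x'=f(x)\&Q\}$ Angel (in $\{x'=f(x)\&Q\}^d$ Demon) chooses a duration $r\ge 0$ of following the ODE with $Q$ true throughout; $?Q$ makes Angel lose and $!Q$ makes Demon lose if $Q$ is false; in $\alpha\cup\beta$ Angel (in $\alpha\cap\beta$ Demon) chooses the branch; in $\alpha^*$ Angel (in $\alpha^\times$ Demon) decides before each iteration whether to repeat or stop; $\alpha;\beta$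 is sequential composition. Formulas: polynomial (in)equalities closed under connectives, real quantifiers, and modalities $\langle\alpha\rangle\varphi$ (Angel has a winning strategy in $\alpha$ to reach $\varphi$ whatever Demon does) and $[\alpha]\varphi\equiv\neg\langle\alpha\rangle\neg\varphi$ (Demon has one), with the standard dGL winning-region semantics ($\langle x:=*\rangle\varphi\leftrightarrow\exists x\varphi$, $\langle x:=\otimes\rangle\varphi\leftrightarrow\forall x\varphi$, $\langle ?Q\rangle\varphi\leftrightarrow Q\wedge\varphi$, $\langle !Q\rangle\varphi\leftrightarrow(Q\rightarrow\varphi)$, $\langle\alpha\cup\beta\rangle\varphi\leftrightarrow\langle\alpha\rangle\varphi\vee\langle\beta\rangle\varphi$, $\langle\alpha\cap\beta\rangle\varphi\leftrightarrow\langle\alpha\rangle\varphi\wedge\langle\beta\rangle\varphi$, $\langle\alpha;\beta\rangle\varphi\leftrightarrow\langle\alpha\rangle\langle\beta\rangle\varphi$, Angel ODE: some duration/solution staying in $Q$ reaches $\varphi$, Demon ODE: all do; $\langle\alpha^*\rangle$ least fixed point, $\langle\alpha^\times\rangle$ greatest fixed point of the respective winning-region equations). $\models\psi$ means $\psi$ is valid. Labels. Every node of the syntax tree carries a unique label; $\alpha_a$ has root label $a$; $\mathrm{nodes}(\alpha_a)$ is the set of labels of its subgames (including $a$); a special label $\mathsf{end}\notin\mathrm{nodes}(\alpha_a)$. A map $S$ assigns formulas to a label set containing $\mathrm{nodes}(\alpha_a)\cup\{\mathsf{end}\}$; $S\{\mathsf{end}\mapsto Q\}$ replaces the value at $\mathsf{end}$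 by $Q$. $\gamma_g,\delta_d$ denote immediate subgames with root labels $g,d$. Game suffix: $\mathrm{suffix}_a(\alpha_a)=\alpha_a$; for $b\ne a$: for loops $((\gamma_g)^* )_a,((\gamma_g)^\times)_a$ it is $\mathrm{suffix}_b(\gamma_g);\alpha_a$; for $\cup,\cap$ the suffix in the branch containing $b$; for $(\gamma_g;\delta_d)_a$ it is $\mathrm{suffix}_b(\gamma_g);\delta_d$ if $b\in\mathrm{nodes}(\gamma_g)$, else $\mathrm{suffix}_b(\delta_d)$. Angelic (resp. Demonic) subvalue map: $\models S(b)\rightarrow\langle\mathrm{suffix}_b(\alpha_a)\rangle S(\mathsf{end})$ (resp. $\models S(b)\rightarrow[\mathrm{suffix}_b(\alpha_a)]S(\mathsf{end})$) for all $b\in\mathrm{nodes}(\alpha_a)$. Angelic existential projection $\mathcal{P}(\alpha_a,S)$: $(x:=* )_a\mapsto(x:=* )_a;?S(\mathsf{end})$; $\{x'=f(x)\&Q\}_a\mapsto\{x'=f(x)\&Q\}_a;?S(\mathsf{end})$; $(\gamma_g\cup\delta_d)_a\mapsto(?S(g);\mathcal{P}(\gamma_g,S))\cup(?S(d);\mathcal{P}(\delta_d,S))$; $((\gamma_g)^* )_a\mapsto(?S(g);\mathcal{P}(\gamma_g,S\{\mathsf{end}\mapsto S(a)\}))^*;?S(\mathsf{end})$; $(\gamma_g;\delta_d)_a\mapsto\mathcal{P}(\gamma_g,S\{\mathsf{end}\mapsto S(d)\});\mathcal{P}(\delta_d,S)$; $\cap\mapsto\mathcal{P}(\gamma_g,S)\cap\mathcal{P}(\delta_d,S)$;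 $((\gamma_g)^\times)_a\mapsto\mathcal{P}(\gamma_g,S\{\mathsf{end}\mapsto S(a)\})^\times$; $x:=e,x:=\otimes,?Q,!Q$, Demon ODE unchanged (labels preserved, new nodes fresh labels). Demonic existential projection $\mathcal{D}(\alpha_a,S)$: $(x:=\otimes)_a\mapsto(x:=\otimes)_a;!S(\mathsf{end})$; $(\{x'=f(x)\&Q\}^d)_a\mapsto(\{x'=f(x)\&Q\}^d)_a;!S(\mathsf{end})$; $(\gamma_g\cap\delta_d)_a\mapsto(!S(g);\mathcal{D}(\gamma_g,S))\cap(!S(d);\mathcal{D}(\delta_d,S))$; $((\gamma_g)^\times)_a\mapsto(!S(g);\mathcal{D}(\gamma_g,S\{\mathsf{end}\mapsto S(g)\vee S(\mathsf{end})\}))^\times;!S(\mathsf{end})$; $(\gamma_g;\delta_d)_a\mapsto\mathcal{D}(\gamma_g,S\{\mathsf{end}\mapsto S(d)\});\mathcal{D}(\delta_d,S)$; $(\gamma_g\cup\delta_d)_a\mapsto\mathcal{D}(\gamma_g,S)\cup\mathcal{D}(\delta_d,S)$; $((\gamma_g)^* )_a\mapsto\mathcal{D}(\gamma_g,S\{\mathsf{end}\mapsto S(a)\})^*$; $x:=e,x:=*,?Q,!Q$, Angel ODE unchanged (labels preserved, new nodes fresh labels). Inductive Angelic subvalue map ($S\Vdash\alpha_a$), recursively: atomic $\alpha$ (assignments of all three kinds, tests, both ODE kinds): $\models S(a)\rightarrow\langle\alpha\rangle S(\mathsf{end})$; $(\gamma_g\cup\delta_d)_a$: $\models S(a)\rightarrow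 S(g)\vee S(d)$, $S\Vdash\gamma_g$, $S\Vdash\delta_d$; $(\gamma_g\cap\delta_d)_a$: $\models S(a)\rightarrow S(g)\wedge S(d)$ and both; $(\gamma_g;\delta_d)_a$: $\models S(a)\rightarrow S(g)$, $S\{\mathsf{end}\mapsto S(d)\}\Vdash\gamma_g$, $S\Vdash\delta_d$; $((\gamma_g)^* )_a$: $\models S(a)\rightarrow\langle\mathcal{P}(\alpha_a,S)\rangle S(\mathsf{end})$ and $S\{\mathsf{end}\mapsto S(a)\}\Vdash\gamma_g$; $((\gamma_g)^\times)_a$: $\models S(a)\rightarrow S(g)\wedge S(\mathsf{end})$ and $S\{\mathsf{end}\mapsto S(a)\}\Vdash\gamma_g$. Inductive Demonic subvalue map, recursively: atomic: $\models S(a)\rightarrow[\alpha]S(\mathsf{end})$; $\cup$: $\models S(a)\rightarrow S(g)\wedge S(d)$ and recursively for both; $\cap$: $\models S(a)\rightarrow S(g)\vee S(d)$ and both; $;$: $\models S(a)\rightarrow S(g)$, $S\{\mathsf{end}\mapsto S(d)\}$ for $\gamma_g$, $S$ for $\delta_d$; $((\gamma_g)^* )_a$: $\models S(a)\rightarrow S(\mathsf{end})\wedge S(g)$ and $S\{\mathsf{end}\mapsto S(a)\}$ for $\gamma_g$; $((\gamma_g)^\times)_a$: $\models S(a)\rightarrow[\mathcal{D}(\alpha_a,S)]S(\mathsf{end})$ and $S\{\mathsf{end}\mapsto S(a)\}$ for $\gamma_g$. *)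

From Stdlib Require Import Reals QArith Qreals List.
Import ListNotations.
Open Scope R_scope.

Definition var := nat.
Definition label := nat.

Inductive term : Type :=
| TVar (x : var)
| TConst (q : Q)
| TNeg (e : term)
| TPlus (e1 e2 : term)
| TTimes (e1 e2 : term).

Inductive game : Type :=
| GAsgn (a : label) (x : var) (e : term)
| GAny (a : label) (x : var)
| GAnyD (a : label) (x : var)
| GTest (a : label) (Q : fml)
| GTestD (a : label) (Q : fml)
| GOde (a : label) (sys : list (var * term)) (Q : fml)
| GOdeD (a : label) (sys : list (var * term)) (Q : fml)
| GChoice (a : label) (g d : game)
| GDChoice (a : label) (g d : game)
| GSeq (a : label) (g d : game)
| GStar (a : label) (g : game)
| GCross (a : label) (g : game)
with fml : Type :=
| FTrue
| FFalse
| FEq (e1 e2 : term)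
| FGe (e1 e2 : term)
| FGt (e1 e2 : term)
| FNot (p : fml)
| FAnd (p q : fml)
| FOr (p q : fml)
| FImp (p q : fml)
| FForall (x : var) (p : fml)
| FExists (x : var) (p : fml)
| FDia (g : game) (p : fml).

Definition FBox (g : game) (p : fml) : fml := FNot (FDia g (FNot p)).

Definition state := var -> R.

Definition upd (w : state) (x : var) (v : R) : state :=
  fun y => if Nat.eqb y x then v else w y.

Fixpoint eval (e : term) (w : state) : R :=
  match e with
  | TVar x => w x
  | TConst q => Q2R q
  | TNeg e => - eval e w
  | TPlus e1 e2 => eval e1 w + eval e2 w
  | TTimes e1 e2 => eval e1 w * eval e2 w
  end.

Definition is_sol (w : state) (sys : list (var * term)) (Q : state -> Prop)
    (r : R) (phi : R -> state) : Prop :=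
  phi 0 = w /\
  (forall t, 0 <= t <= r ->
     (forall xe, In xe sys ->
        derivable_pt_lim (fun s => phi s (fst xe)) t (eval (snd xe) (phi t))) /\
     (forall y, ~ In y (map fst sys) -> phi t y = w y) /\
     Q (phi t)).

(** [fsem p w]: formula p is true in state w.
    [gsem g X w]: Angel has a winning strategy in game g from w to reach X
    (winning-region semantics; * is a least, x a greatest fixed point). *)
Fixpoint fsem (p : fml) (w : state) {struct p} : Prop :=
  match p with
  | FTrue => True
  | FFalse => False
  | FEq e1 e2 => eval e1 w = eval e2 w
  | FGe e1 e2 => eval e1 w >= eval e2 w
  | FGt e1 e2 => eval e1 w > eval e2 w
  | FNot p => ~ fsem p w
  | FAnd p q => fsem p w /\ fsem q w
  | FOr p q => fsem p w \/ fsem q w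
  | FImp p q => fsem p w -> fsem q w
  | FForall x p => forall v, fsem p (upd w x v)
  | FExists x p => exists v, fsem p (upd w x v)
  | FDia g p => gsem g (fsem p) w
  end
with gsem (g : game) (X : state -> Prop) (w : state) {struct g} : Prop :=
  match g with
  | GAsgn _ x e => X (upd w x (eval e w))
  | GAny _ x => exists v, X (upd w x v)
  | GAnyD _ x => forall v, X (upd w x v)
  | GTest _ Q => fsem Q w /\ X w
  | GTestD _ Q => fsem Q w -> X w
  | GOde _ sys Q =>
      exists r phi, 0 <= r /\ is_sol w sys (fsem Q) r phi /\ X (phi r)
  | GOdeD _ sys Q =>
      forall r phi, 0 <= r -> is_sol w sys (fsem Q) r phi -> X (phi r)
  | GChoice _ g1 g2 => gsem g1 X w \/ gsem g2 X w
  | GDChoice _ g1 g2 => gsem g1 X w /\ gsem g2 X w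
  | GSeq _ g1 g2 => gsem g1 (gsem g2 X) w
  | GStar _ g1 =>
      (* least fixed point of Z = X u <g1>Z *)
      forall Z : state -> Prop,
        (forall u, X u \/ gsem g1 Z u -> Z u) -> Z w
  | GCross _ g1 =>
      (* greatest fixed point of Z = X n <g1>Z *)
      exists Z : state -> Prop,
        Z w /\ (forall u, Z u -> X u /\ gsem g1 Z u)
  end.

Definition valid (p : fml) : Prop := forall w, fsem p w.

Definition lbl (g : game) : label :=
  match g with
  | GAsgn a _ _ | GAny a _ | GAnyD a _ | GTest a _ | GTestD a _
  | GOde a _ _ | GOdeD a _ _ | GChoice a _ _ | GDChoice a _ _
  | GSeq a _ _ | GStar a _ | GCross a _ => a
  end.

Fixpoint nodes (g : game) : list label :=
  match g with
  | GChoice a g1 g2 | GDChoice a g1 g2 | GSeq a g1 g2 => a :: nodes g1 ++ nodes g2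
  | GStar a g1 | GCross a g1 => a :: nodes g1
  | _ => [lbl g]
  end.

Definition inb (b : label) (l : list label) : bool := existsb (Nat.eqb b) l.

(** suffix_b(g). New sequence nodes are given the label of the loop node
    (labels carry no semantic meaning). For b not in nodes(g) the result is
    irrelevant (we return g). *)
Fixpoint suffix (b : label) (g : game) : game :=
  if Nat.eqb b (lbl g) then g else
  match g with
  | GStar a g1 | GCross a g1 => GSeq a (suffix b g1) g
  | GChoice _ g1 g2 | GDChoice _ g1 g2 =>
      if inb b (nodes g1) then suffix b g1 else suffix b g2
  | GSeq a g1 g2 =>
      if inb b (nodes g1) then GSeq a (suffix b g1) g2 else suffix b g2
  | _ => g
  end.

Inductive lab : Type := Lbl (n : label) | End.

Definition smap := lab -> fml.

Definition set_end (S : smap) (Q : fml) : smap :=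
  fun l => match l with End => Q | Lbl n => S (Lbl n) end.

Definition ang_subval (S : smap) (g : game) : Prop :=
  forall b, In b (nodes g) ->
    valid (FImp (S (Lbl b)) (FDia (suffix b g) (S End))).

Definition dem_subval (S : smap) (g : game) : Prop :=
  forall b, In b (nodes g) ->
    valid (FImp (S (Lbl b)) (FBox (suffix b g) (S End))).

Fixpoint angproj (g : game) (S : smap) : game :=
  match g with
  | GAny a x => GSeq a (GAny a x) (GTest a (S End))
  | GOde a sys Q => GSeq a (GOde a sys Q) (GTest a (S End))
  | GChoice a g1 g2 =>
      GChoice a (GSeq a (GTest a (S (Lbl (lbl g1)))) (angproj g1 S))
                (GSeq a (GTest a (S (Lbl (lbl g2)))) (angproj g2 S))
  | GStar a g1 =>
      GSeq a (GStar a (GSeq a (GTest a (S (Lbl (lbl g1))))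
                              (angproj g1 (set_end S (S (Lbl a))))))
             (GTest a (S End))
  | GSeq a g1 g2 =>
      GSeq a (angproj g1 (set_end S (S (Lbl (lbl g2))))) (angproj g2 S)
  | GDChoice a g1 g2 => GDChoice a (angproj g1 S) (angproj g2 S)
  | GCross a g1 => GCross a (angproj g1 (set_end S (S (Lbl a))))
  | _ => g
  end.

Fixpoint demproj (g : game) (S : smap) : game :=
  match g with
  | GAnyD a x => GSeq a (GAnyD a x) (GTestD a (S End))
  | GOdeD a sys Q => GSeq a (GOdeD a sys Q) (GTestD a (S End))
  | GDChoice a g1 g2 =>
      GDChoice a (GSeq a (GTestD a (S (Lbl (lbl g1)))) (demproj g1 S))
                 (GSeq a (GTestD a (S (Lbl (lbl g2)))) (demproj g2 S))
  | GCross a g1 =>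
      GSeq a (GCross a (GSeq a (GTestD a (S (Lbl (lbl g1))))
                   (demproj g1 (set_end S (FOr (S (Lbl (lbl g1))) (S End))))))
             (GTestD a (S End))
  | GSeq a g1 g2 =>
      GSeq a (demproj g1 (set_end S (S (Lbl (lbl g2))))) (demproj g2 S)
  | GChoice a g1 g2 => GChoice a (demproj g1 S) (demproj g2 S)
  | GStar a g1 => GStar a (demproj g1 (set_end S (S (Lbl a))))
  | _ => g
  end.

Fixpoint ind_ang (S : smap) (g : game) : Prop :=
  match g with
  | GChoice a g1 g2 =>
      valid (FImp (S (Lbl a)) (FOr (S (Lbl (lbl g1))) (S (Lbl (lbl g2))))) /\
      ind_ang S g1 /\ ind_ang S g2
  | GDChoice a g1 g2 =>
      valid (FImp (S (Lbl a)) (FAnd (S (Lbl (lbl g1))) (S (Lbl (lbl g2))))) /\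
      ind_ang S g1 /\ ind_ang S g2
  | GSeq a g1 g2 =>
      valid (FImp (S (Lbl a)) (S (Lbl (lbl g1)))) /\
      ind_ang (set_end S (S (Lbl (lbl g2)))) g1 /\ ind_ang S g2
  | GStar a g1 =>
      valid (FImp (S (Lbl a)) (FDia (angproj g S) (S End))) /\
      ind_ang (set_end S (S (Lbl a))) g1
  | GCross a g1 =>
      valid (FImp (S (Lbl a)) (FAnd (S (Lbl (lbl g1))) (S End))) /\
      ind_ang (set_end S (S (Lbl a))) g1
  | _ =>
      valid (FImp (S (Lbl (lbl g))) (FDia g (S End)))
  end.

Fixpoint ind_dem (S : smap) (g : game) : Prop :=
  match g with
  | GChoice a g1 g2 =>
      valid (FImp (S (Lbl a)) (FAnd (S (Lbl (lbl g1))) (S (Lbl (lbl g2))))) /\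
      ind_dem S g1 /\ ind_dem S g2
  | GDChoice a g1 g2 =>
      valid (FImp (S (Lbl a)) (FOr (S (Lbl (lbl g1))) (S (Lbl (lbl g2))))) /\
      ind_dem S g1 /\ ind_dem S g2
  | GSeq a g1 g2 =>
      valid (FImp (S (Lbl a)) (S (Lbl (lbl g1)))) /\
      ind_dem (set_end S (S (Lbl (lbl g2)))) g1 /\ ind_dem S g2
  | GStar a g1 =>
      valid (FImp (S (Lbl a)) (FAnd (S End) (S (Lbl (lbl g1))))) /\
      ind_dem (set_end S (S (Lbl a))) g1
  | GCross a g1 =>
      valid (FImp (S (Lbl a)) (FBox (demproj g S) (S End))) /\
      ind_dem (set_end S (S (Lbl a))) g1
  | _ =>
      valid (FImp (S (Lbl (lbl g))) (FBox g (S End)))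
  end.

(* At
   a node's own label this follows from the inductive conditions, the loops
   being the only non-local cases: for Angel's α^× and Demon's α^* the value
   S(a) is a loop invariant, while for Angel's α^* and Demon's α^× the
   projections P(α,S) and D(α,S) only insert tests that the projecting player
   must pass, so winning the projected game wins α.  For a node strictly inside
   a compound game, the suffix is the child's suffix followed by the rest of the
   game; the child's induction hypothesis, with S(end) replaced by the value at
   which the rest begins, composes with the top case of the rest.  Since
   [α]X = ¬<α>¬X is monotone and composes along sequences just like <α>, one
   suffix argument serves both players. *)

From Stdlib Require Import Reals QArith Qreals List.
Import ListNotations.

Lemma lbl_in_nodes (g : game) : In (lbl g) (nodes g).
Proof. destruct g; simpl; auto. Qed.

Lemma suffix_lbl (g : game) : suffix (lbl g) g = g.
Proof. destruct g; simpl; rewrite Nat.eqb_refl; reflexivity. Qed.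

Lemma inb_In (b : label) (l : list label) : inb b l = true <-> In b l.
Proof.
  unfold inb. rewrite existsb_exists. split.
  - intros [x [Hx Hb]]. apply Nat.eqb_eq in Hb. subst. exact Hx.
  - intros H. exists b. split; [exact H | apply Nat.eqb_refl].
Qed.

Lemma in_app_inb_false (b : label) (l1 l2 : list label) :
  In b (l1 ++ l2) -> inb b l1 = false -> In b l2.
Proof.
  intros Hb E. apply in_app_or in Hb. destruct Hb as [Hb | Hb]; [| exact Hb].
  apply inb_In in Hb. congruence.
Qed.

Lemma gsem_mono (g : game) : forall (X Y : state -> Prop) w,
  (forall u, X u -> Y u) -> gsem g X w -> gsem g Y w.
Proof.
  induction g; intros X Y w HXY H; simpl in *.
  - auto.
  - destruct H as [v Hv]. eauto.
  - auto.
  - destruct H. auto.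
  - auto.
  - destruct H as [r [phi [Hr [Hsol HX]]]]. exists r, phi. auto.
  - eauto.
  - destruct H; [left; eapply IHg1 | right; eapply IHg2]; eauto.
  - destruct H; split; [eapply IHg1 | eapply IHg2]; eauto.
  - eapply IHg1; [| exact H]. intros u Hu. eapply IHg2; eauto.
  - intros Z HZ. apply H. intros u [Hu | Hu]; apply HZ; auto.
  - destruct H as [Z [Hw HZ]]. exists Z. split; [exact Hw |].
    intros u Hu. destruct (HZ u Hu). auto.
Qed.

Lemma gsem_seq (a : label) (g1 g2 : game) (X : state -> Prop) (w : state) :
  gsem g1 (gsem g2 X) w -> gsem (GSeq a g1 g2) X w.
Proof. intros H. exact H. Qed.

(* [fsem (FBox g p)] is convertible to [gbox g (fsem p)]. *)
Definition gbox (g : game) (X : state -> Prop) (w : state) : Prop :=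
  ~ gsem g (fun u => ~ X u) w.

Lemma gbox_mono (g : game) (X Y : state -> Prop) (w : state) :
  (forall u, X u -> Y u) -> gbox g X w -> gbox g Y w.
Proof.
  intros HXY H G. apply H. revert G. apply gsem_mono.
  intros u HnY HX. exact (HnY (HXY u HX)).
Qed.

Lemma gbox_seq (a : label) (g1 g2 : game) (X : state -> Prop) (w : state) :
  gbox g1 (gbox g2 X) w -> gbox (GSeq a g1 g2) X w.
Proof.
  intros H G. apply H. revert G. cbn [gsem]. apply gsem_mono.
  intros u Hu Hbox. exact (Hbox Hu).
Qed.

Lemma gsem_star_fold (a : label) (g : game) (X : state -> Prop) (w : state) :
  gsem g (gsem (GStar a g) X) w -> gsem (GStar a g) X w.
Proof.
  intros H Z HZ. apply HZ. right. revert H. apply gsem_mono.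
  intros u Hu. exact (Hu Z HZ).
Qed.

Lemma gsem_cross_invariant (a : label) (g : game) (Z X : state -> Prop) (w : state) :
  (forall u, Z u -> X u /\ gsem g Z u) -> Z w -> gsem (GCross a g) X w.
Proof. intros HZ Hw. exists Z. auto. Qed.

Lemma gbox_star_invariant (a : label) (g : game) (Z X : state -> Prop) (w : state) :
  (forall u, Z u -> X u /\ gbox g Z u) -> Z w -> gbox (GStar a g) X w.
Proof.
  intros HZ Hw G. refine (G (fun u => ~ Z u) _ Hw).
  intros u [HnX | Hg] Hu; destruct (HZ u Hu) as [HX Hbox].
  - exact (HnX HX).
  - exact (Hbox Hg).
Qed.

Lemma angproj_sound (g : game) : forall (S : smap) (X : state -> Prop) w,
  gsem (angproj g S) X w -> gsem g X w.
Proof.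
  induction g; intros S X w H; simpl in *; auto.
  - destruct H as [v [_ Hv]]. eauto.
  - destruct H as [r [phi [Hr [Hsol [_ HX]]]]]. exists r, phi. auto.
  - destruct H as [[_ H] | [_ H]]; [left; eapply IHg1 | right; eapply IHg2]; eauto.
  - destruct H. split; [eapply IHg1 | eapply IHg2]; eauto.
  - apply IHg1 in H. revert H. apply gsem_mono. intros u. apply IHg2.
  - refine (H (gsem (GStar a g) X) _). intros u [[_ Hu] | [_ Hu]].
    + intros Z HZ. apply HZ. left. exact Hu.
    + apply gsem_star_fold. exact (IHg _ _ _ Hu).
  - destruct H as [Z [Hw HZ]]. exists Z. split; [exact Hw |].
    intros u Hu. destruct (HZ u Hu). split; [assumption | eapply IHg; eauto].
Qed.

Lemma gsem_demproj (g : game) : forall (S : smap) (X : state -> Prop) w,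
  gsem g X w -> gsem (demproj g S) X w.
Proof.
  induction g; intros S X w H; simpl in *; auto.
  - destruct H; [left; apply IHg1 | right; apply IHg2]; auto.
  - destruct H. split; intros _; auto.
  - apply IHg1. revert H. apply gsem_mono. intros u. apply IHg2.
  - intros Z HZ. apply H. intros u [Hu | Hu]; apply HZ; auto.
  - destruct H as [Z [Hw HZ]]. exists Z. split; [exact Hw |].
    intros u Hu. destruct (HZ u Hu). auto.
Qed.

Section SuffixSoundness.

Variable F : game -> (state -> Prop) -> state -> Prop.
Hypothesis F_mono : forall g (X Y : state -> Prop) w,
  (forall u, X u -> Y u) -> F g X w -> F g Y w.
Hypothesis F_seq : forall a g1 g2 X w, F g1 (F g2 X) w -> F (GSeq a g1 g2) X w.
Variable P : label -> state -> Prop.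

Definition suffix_sound (g : game) (X : state -> Prop) : Prop :=
  forall b, In b (nodes g) -> forall w, P b w -> F (suffix b g) X w.

Lemma suffix_sound_top (g : game) (X : state -> Prop) :
  suffix_sound g X -> forall w, P (lbl g) w -> F g X w.
Proof. intros H w Hw. rewrite <- (suffix_lbl g). exact (H _ (lbl_in_nodes g) w Hw). Qed.

Lemma suffix_sound_atom (g : game) (X : state -> Prop) :
  nodes g = [lbl g] -> (forall w, P (lbl g) w -> F g X w) -> suffix_sound g X.
Proof.
  intros Hn Htop b Hb. rewrite Hn in Hb. destruct Hb as [<- | []].
  rewrite suffix_lbl. exact Htop.
Qed.

Lemma suffix_sound_branch (a : label) (g g1 g2 : game) (X : state -> Prop) :
  nodes g = a :: nodes g1 ++ nodes g2 ->
  (forall b, suffix b g = if b =? a then g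
                          else if inb b (nodes g1) then suffix b g1 else suffix b g2) ->
  (forall w, P a w -> F g X w) ->
  suffix_sound g1 X -> suffix_sound g2 X -> suffix_sound g X.
Proof.
  intros Hn Hsuf Htop H1 H2 b Hb. rewrite Hsuf.
  destruct (Nat.eqb_spec b a) as [-> | Hba]; [exact Htop |].
  rewrite Hn in Hb. destruct Hb as [-> | Hb]; [contradiction |].
  destruct (inb b (nodes g1)) eqn:E1.
  - apply H1. apply inb_In. exact E1.
  - apply H2. exact (in_app_inb_false _ _ _ Hb E1).
Qed.

Lemma suffix_sound_seq (a : label) (g1 g2 : game) (X : state -> Prop) :
  (forall w, P a w -> P (lbl g1) w) ->
  suffix_sound g1 (P (lbl g2)) -> suffix_sound g2 X -> suffix_sound (GSeq a g1 g2) X.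
Proof.
  intros Ha H1 H2.
  assert (Hcont : forall w, P (lbl g2) w -> F g2 X w) by exact (suffix_sound_top g2 X H2).
  intros b Hb w Hw. simpl.
  destruct (Nat.eqb_spec b a) as [-> | Hba].
  - apply F_seq. eapply F_mono; [exact Hcont |].
    exact (suffix_sound_top g1 _ H1 w (Ha w Hw)).
  - destruct Hb as [-> | Hb]; [contradiction |].
    destruct (inb b (nodes g1)) eqn:E1.
    + apply F_seq. eapply F_mono; [exact Hcont |].
      apply H1; [apply inb_In; exact E1 | exact Hw].
    + exact (H2 b (in_app_inb_false _ _ _ Hb E1) w Hw).
Qed.

Lemma suffix_sound_loop (a : label) (g g1 : game) (X : state -> Prop) :
  nodes g = a :: nodes g1 ->
  (forall b, suffix b g = if b =? a then g else GSeq a (suffix b g1) g) ->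
  (forall w, P a w -> F g X w) ->
  suffix_sound g1 (P a) -> suffix_sound g X.
Proof.
  intros Hn Hsuf Htop H1 b Hb w Hw. rewrite Hsuf.
  destruct (Nat.eqb_spec b a) as [-> | Hba]; [exact (Htop w Hw) |].
  rewrite Hn in Hb. destruct Hb as [-> | Hb]; [contradiction |].
  apply F_seq. eapply F_mono; [exact Htop | exact (H1 b Hb w Hw)].
Qed.

End SuffixSoundness.

Arguments suffix_sound_top {F P g X} _ _ _.

Definition node_sem (S : smap) (b : label) : state -> Prop := fsem (S (Lbl b)).

Lemma ind_ang_suffix_sound (g : game) : forall S : smap,
  ind_ang S g -> suffix_sound gsem (node_sem S) g (fsem (S End)).
Proof.
  induction g as [ | | | | | | | a g1 IH1 g2 IH2 | a g1 IH1 g2 IH2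
                 | a g1 IH1 g2 IH2 | a g1 IH | a g1 IH ]; intros S HS; simpl in HS.
  1-7: apply suffix_sound_atom; [reflexivity | exact HS].
  - destruct HS as [Hsplit [H1 H2]].
    apply (suffix_sound_branch _ _ a _ g1 g2); auto.
    intros w Hw. destruct (Hsplit w Hw) as [Hg1 | Hg2];
      [ left; exact (suffix_sound_top (IH1 _ H1) w Hg1)
      | right; exact (suffix_sound_top (IH2 _ H2) w Hg2) ].
  - destruct HS as [Hsplit [H1 H2]].
    apply (suffix_sound_branch _ _ a _ g1 g2); auto.
    intros w Hw. destruct (Hsplit w Hw) as [Hg1 Hg2]. split;
      [ exact (suffix_sound_top (IH1 _ H1) w Hg1)
      | exact (suffix_sound_top (IH2 _ H2) w Hg2) ].
  - destruct HS as [Hfirst [H1 H2]].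
    exact (suffix_sound_seq _ gsem_mono gsem_seq _ a g1 g2 _ Hfirst (IH1 _ H1) (IH2 _ H2)).
  - destruct HS as [Hproj H1].
    apply (suffix_sound_loop _ gsem_mono gsem_seq _ a _ g1); auto.
    + intros w Hw. exact (angproj_sound (GStar a g1) S _ w (Hproj w Hw)).
    + exact (IH _ H1).
  - destruct HS as [Hsplit H1].
    apply (suffix_sound_loop _ gsem_mono gsem_seq _ a _ g1); auto.
    + intros w Hw. apply (gsem_cross_invariant a g1 (node_sem S a)); [| exact Hw].
      intros u Hu. destruct (Hsplit u Hu) as [Hg1 Hend].
      split; [exact Hend |]. exact (suffix_sound_top (IH _ H1) u Hg1).
    + exact (IH _ H1).
Qed.

Lemma ind_dem_suffix_sound (g : game) : forall S : smap,
  ind_dem S g -> suffix_sound gbox (node_sem S) g (fsem (S End)).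
Proof.
  induction g as [ | | | | | | | a g1 IH1 g2 IH2 | a g1 IH1 g2 IH2
                 | a g1 IH1 g2 IH2 | a g1 IH | a g1 IH ]; intros S HS; simpl in HS.
  1-7: apply suffix_sound_atom; [reflexivity | exact HS].
  - destruct HS as [Hsplit [H1 H2]].
    apply (suffix_sound_branch _ _ a _ g1 g2); auto.
    intros w Hw [G | G]; destruct (Hsplit w Hw) as [Hg1 Hg2];
      [ exact (suffix_sound_top (IH1 _ H1) w Hg1 G)
      | exact (suffix_sound_top (IH2 _ H2) w Hg2 G) ].
  - destruct HS as [Hsplit [H1 H2]].
    apply (suffix_sound_branch _ _ a _ g1 g2); auto.
    intros w Hw [G1 G2]. destruct (Hsplit w Hw) as [Hg1 | Hg2];
      [ exact (suffix_sound_top (IH1 _ H1) w Hg1 G1)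
      | exact (suffix_sound_top (IH2 _ H2) w Hg2 G2) ].
  - destruct HS as [Hfirst [H1 H2]].
    exact (suffix_sound_seq _ gbox_mono gbox_seq _ a g1 g2 _ Hfirst (IH1 _ H1) (IH2 _ H2)).
  - destruct HS as [Hsplit H1].
    apply (suffix_sound_loop _ gbox_mono gbox_seq _ a _ g1); auto.
    + intros w Hw. apply (gbox_star_invariant a g1 (node_sem S a)); [| exact Hw].
      intros u Hu. destruct (Hsplit u Hu) as [Hend Hg1].
      split; [exact Hend |]. exact (suffix_sound_top (IH _ H1) u Hg1).
    + exact (IH _ H1).
  - destruct HS as [Hproj H1].
    apply (suffix_sound_loop _ gbox_mono gbox_seq _ a _ g1); auto.
    + intros w Hw G. exact (Hproj w Hw (gsem_demproj (GCross a g1) S _ w G)).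
    + exact (IH _ H1).
Qed.

Theorem mainTheorem3 (g : game) (Huniq : NoDup (nodes g)) :
  (forall S : smap, ind_ang S g -> ang_subval S g) /\
  (forall S : smap, ind_dem S g -> dem_subval S g).
Proof.
  split; intros S HS b Hb w.
  - exact (ind_ang_suffix_sound g S HS b Hb w).
  - exact (ind_dem_suffix_sound g S HS b Hb w).
Qed.
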